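(* Let $k\ge 1$. A graph $F$ has a path decomposition of width at most $k$ if and only if $F$ has a $k$-simplicial walk that is decomposing in $F$.
   Context: Graphs are finite and undirected. A path decomposition of $F$ is a path $P$ with bags $\beta(t)\subseteq V(F)$, $t\in V(P)$, such that every edge of $F$ is contained in some bag and for every $v\in V(F)$ the set of nodes whose bags contain $v$ induces a nonempty connected subpath; its width is $\max_t|\beta(t)|-1$. A $k$-simplicial walk of length $t$ in $F$ is a sequence $(\sigma_1,\dots,\sigma_t)$ of nonempty subsets of $V(F)$ of size at most $k+1$ with $|\sigma_1|=1$ such that for each $i\in[t-1]$ there is a vertex $u$ with $\sigma_{i+1}=\sigma_i\sqcup\{u\}$ ($u$ is incoming at step $i+1$) or $\sigma_i=\sigma_{i+1}\sqcup\{u\}$ ($u$ is outgoing); the vertex of $\sigma_1$ counts as incoming at step 1. It is decomposing in $F$ if (D1) every vertex of $F$ is incoming exactly once, and (D2) every edge $uv\in E(F)$ is contained in at least one $\sigma_i$. *)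

(* A finite simple graph F is a finType T of vertices with a
   symmetric irreflexive edge relation e : rel T. *)
From mathcomp Require Import all_boot.
Set Implicit Arguments. Unset Strict Implicit. Unset Printing Implicit Defensive.

Section Defs.
Variable T : finType.

(* A path decomposition is given by the nonempty sequence of bags along the
   path P = t_0 - t_1 - ... - t_{n-1}. *)
Definition is_path_decomposition (e : rel T) (bags : seq {set T}) : Prop :=
  [/\ 0 < size bags,
      (forall u v, e u v -> exists2 i, i < size bags &
          (u \in nth set0 bags i) && (v \in nth set0 bags i)),
      (forall v, exists2 i, i < size bags & v \in nth set0 bags i) &
      (forall v i j l, i <= j -> j <= l -> l < size bags ->
          v \in nth set0 bags i -> v \in nth set0 bags l ->
          v \in nth set0 bags j)].

(* width = max |bag| - 1 *)
Definition pd_width_le (bags : seq {set T}) (k : nat) : Prop :=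
  forall i, i < size bags -> #|nth set0 bags i| <= k.+1.

Definition has_pd_width_le (e : rel T) (k : nat) : Prop :=
  exists bags, is_path_decomposition e bags /\ pd_width_le bags k.

(* k-simplicial walk (sigma_1, ..., sigma_t), stored 0-indexed. *)
Definition is_simplicial_walk (k : nat) (s : seq {set T}) : Prop :=
  [/\ 0 < size s,
      (forall i, i < size s -> nth set0 s i != set0 /\ #|nth set0 s i| <= k.+1),
      #|nth set0 s 0| = 1 &
      (forall i, i.+1 < size s -> exists u,
          (u \notin nth set0 s i /\ nth set0 s i.+1 = u |: nth set0 s i) \/
          (u \notin nth set0 s i.+1 /\ nth set0 s i = u |: nth set0 s i.+1))].

Definition incoming (s : seq {set T}) (i : nat) (u : T) : bool :=
  if i is i'.+1 then (u \in nth set0 s i) && (u \notin nth set0 s i')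
  else u \in nth set0 s 0.

Definition is_decomposing (e : rel T) (s : seq {set T}) : Prop :=
  (forall v, #|[set i : 'I_(size s) | incoming s i v]| = 1) /\
  (forall u v, e u v -> exists2 i, i < size s &
      (u \in nth set0 s i) && (v \in nth set0 s i)).

End Defs.

(* A decomposing walk is itself a path decomposition: a vertex that left the
   walk and came back would be incoming twice, so every vertex occupies an interval of steps.
   Conversely, list the vertices v_0, ..., v_(n-1) by the first bag containing them and let
   stage j be v_j together with the earlier vertices of the first bag of v_j; it lies in that
   bag, so it has at most k + 1 elements.  By the interval property, stage j + 1 minus v_(j+1)
   is contained in stage j, so the walk goes from stage j to stage j + 1 by deleting vertices
   one at a time and then adding v_(j+1).  Thus v_j is incoming exactly once, and an edge uv
   with u before v lies in the stage of v. *)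

From mathcomp Require Import all_boot.
Set Implicit Arguments. Unset Strict Implicit. Unset Printing Implicit Defensive.

Section Incoming.
Variable T : finType.
Implicit Types (s : seq {set T}) (v : T).

Lemma incoming_mem s i v : incoming s i v -> v \in nth set0 s i.
Proof. by case: i => [|i] //= /andP[]. Qed.

Lemma exists_incoming_le s v i :
  v \in nth set0 s i -> exists2 m, m <= i & incoming s m v.
Proof.
elim: i => [|i IHi] v_i; first by exists 0.
have [v_i'|v_i'] := boolP (v \in nth set0 s i); last by exists i.+1; rewrite //= v_i.
by have [m le_mi inc_m] := IHi v_i'; exists m; first exact: leqW.
Qed.

Lemma exists_incoming_between s v j l : j < l ->
  v \notin nth set0 s j -> v \in nth set0 s l -> exists2 m, j < m <= l & incoming s m v.
Proof.
elim: l => [|l IHl] // lt_jl v_j v_l.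
have [v_l'|v_l'] := boolP (v \in nth set0 s l); last by exists l.+1; rewrite ?lt_jl //= v_l.
have lt_jl' : j < l by rewrite ltn_neqAle -ltnS lt_jl andbT; apply: contraNneq v_j => ->.
by have [m /andP[lt_jm le_ml] inc_m] := IHl lt_jl' v_j v_l'; exists m; rewrite ?lt_jm ?leqW.
Qed.

Lemma card_incoming_eq1 s v :
  (exists2 i, i < size s & v \in nth set0 s i) ->
  (forall i j, i < size s -> j < size s -> incoming s i v -> incoming s j v -> i = j) ->
  #|[set i : 'I_(size s) | incoming s i v]| = 1.
Proof.
move=> [i lt_is v_i] inc_inj; have [m le_mi inc_m] := exists_incoming_le v_i.
have lt_ms : m < size s by exact: leq_ltn_trans lt_is.
apply: (@eq_card1 _ (Ordinal lt_ms)) => j; rewrite !inE.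
apply/idP/eqP => [inc_j|-> //]; apply: val_inj.
exact: inc_inj (ltn_ord j) lt_ms inc_j inc_m.
Qed.

Section IncomingOnce.
Variables (s : seq {set T}) (v : T).
Hypothesis incoming_once : #|[set i : 'I_(size s) | incoming s i v]| = 1.

Lemma incoming_inj i j : i < size s -> j < size s ->
  incoming s i v -> incoming s j v -> i = j.
Proof.
move=> lt_is lt_js inc_i inc_j.
have /card_le1_eqP inc_eq : #|[set i : 'I_(size s) | incoming s i v]| <= 1 by rewrite incoming_once.
by have := inc_eq (Ordinal lt_is) (Ordinal lt_js); rewrite !inE => /(_ inc_i inc_j) [].
Qed.

Lemma incoming_once_mem : exists2 i, i < size s & v \in nth set0 s i.
Proof.
have /card_gt0P[i] : 0 < #|[set i : 'I_(size s) | incoming s i v]| by rewrite incoming_once.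
by rewrite inE => /incoming_mem v_i; exists i.
Qed.

Lemma incoming_once_interval i j l : i <= j <= l -> l < size s ->
  v \in nth set0 s i -> v \in nth set0 s l -> v \in nth set0 s j.
Proof.
move=> /andP[le_ij le_jl] lt_ls v_i v_l; apply/negPn/negP => v_j.
have lt_jl : j < l by rewrite ltn_neqAle le_jl andbT; apply: contraNneq v_j => ->.
have [m /andP[lt_jm le_ml] inc_m] := exists_incoming_between lt_jl v_j v_l.
have [m' le_m'i inc_m'] := exists_incoming_le v_i.
have lt_m's : m' < size s.
  by rewrite (leq_ltn_trans le_m'i) // (leq_ltn_trans le_ij) ?(leq_ltn_trans le_jl).
have := incoming_inj (leq_ltn_trans le_ml lt_ls) lt_m's inc_m inc_m'.
by move=> eq_m; move: lt_jm; rewrite eq_m ltnNge (leq_trans le_m'i le_ij).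
Qed.

End IncomingOnce.

Lemma decomposing_walk_path_decomposition (e : rel T) k s :
  is_simplicial_walk k s -> is_decomposing e s ->
  is_path_decomposition e s /\ pd_width_le s k.
Proof.
case=> s_gt0 s_card _ _ [inc_once s_edges]; split; last by move=> i /s_card[].
split=> // [v|v i j l le_ij le_jl]; first exact: incoming_once_mem.
by apply: incoming_once_interval; rewrite ?le_ij.
Qed.

End Incoming.

Section Removals.
Variable T : finType.
Implicit Types (X A B : {set T}) (r : seq T).

Definition removal_step A B : bool := [exists u in A, B == A :\ u].

Definition removals X r : seq {set T} := scanl (fun A x => A :\ x) X r.

Lemma path_removals X r : uniq r -> {subset r <= X} -> path removal_step X (removals X r).
Proof.
elim: r X => [//|x r IHr] X /= /andP[x_r uniq_r] sub_rX.
rewrite IHr ?andbT //; first by apply/exists_inP; exists x; rewrite ?sub_rX ?mem_head.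
by move=> y r_y; rewrite !inE sub_rX ?inE ?r_y ?orbT // andbT; apply: contraNneq x_r => <-.
Qed.

Lemma last_removals X r : last X (removals X r) = X :\: [set x in r].
Proof.
elim: r X => [|x r IHr] X /=; first by apply/setP => y; rewrite !inE.
by rewrite IHr; apply/setP => y; rewrite !inE negb_or andbA [(y \notin r) && _]andbC.
Qed.

Lemma removals_between X r :
  {in removals X r, forall A, X :\: [set x in r] \subset A /\ A \subset X}.
Proof.
elim: r X => [//|x r IHr] X A /=; rewrite inE => /orP[/eqP->|/IHr[lb ub]].
  split; last exact: subD1set.
  by apply/subsetP => y; rewrite !inE negb_or => /andP[/andP[-> _] ->].
split; last by rewrite (subset_trans ub) ?subD1set.
apply: subset_trans lb; apply/subsetP => y; rewrite !inE negb_or.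
by case/andP=> /andP[-> ->] ->.
Qed.

End Removals.

Section PathDecompositionToWalk.
Variables (T : finType) (e : rel T) (k : nat) (bags : seq {set T}) (x0 : T).
Hypothesis k_gt0 : 0 < k.
Hypothesis bags_pd : is_path_decomposition e bags.
Hypothesis bags_width : pd_width_le bags k.

Local Notation bag i := (nth set0 bags i).
Local Notation n := #|T|.

Definition first_bag (u : T) : nat := find (fun B : {set T} => u \in B) bags.

Lemma has_bag u : has (fun B : {set T} => u \in B) bags.
Proof.
case: bags_pd => _ _ covers _; have [i lt_i u_i] := covers u.
by apply/hasP; exists (bag i); rewrite ?mem_nth.
Qed.

Lemma first_bag_lt u : first_bag u < size bags.
Proof. by rewrite /first_bag -has_find has_bag. Qed.

Lemma mem_first_bag u : u \in bag (first_bag u).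
Proof. exact: nth_find (has_bag u). Qed.

Lemma first_bag_le u i : u \in bag i -> first_bag u <= i.
Proof. by move=> u_i; rewrite leqNgt; apply: contraL u_i => /(before_find set0) ->. Qed.

Lemma mem_bag_between u j l : first_bag u <= j <= l -> l < size bags ->
  u \in bag l -> u \in bag j.
Proof.
case: bags_pd => _ _ _ interval /andP[le_fj le_jl] lt_l u_l.
exact: interval le_fj le_jl lt_l (mem_first_bag u) u_l.
Qed.

Definition vorder : seq T := sort (fun u v => first_bag u <= first_bag v) (enum T).
Definition vtx (j : nat) : T := nth x0 vorder j.
Definition rank (u : T) : nat := index u vorder.

Lemma size_vorder : size vorder = n.
Proof. by rewrite size_sort cardE. Qed.

Lemma n_gt0 : 0 < n.
Proof. by apply/card_gt0P; exists x0. Qed.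

Lemma mem_vorder u : u \in vorder.
Proof. by rewrite mem_sort mem_enum. Qed.

Lemma rank_lt u : rank u < n.
Proof. by rewrite -size_vorder index_mem mem_vorder. Qed.

Lemma rankK u : vtx (rank u) = u.
Proof. by rewrite /vtx nth_index ?mem_vorder. Qed.

Lemma vtxK j : j < n -> rank (vtx j) = j.
Proof. by rewrite -size_vorder => lt_j; rewrite /rank /vtx index_uniq ?sort_uniq ?enum_uniq. Qed.

Lemma first_bag_vtx_mono i j : i <= j -> j < n -> first_bag (vtx i) <= first_bag (vtx j).
Proof.
rewrite -size_vorder => le_ij lt_j.
have sorted_vorder : sorted (fun u v => first_bag u <= first_bag v) vorder.
  by apply: sort_sorted => u v; apply: leq_total.
apply: (sorted_leq_nth _ _ x0 sorted_vorder) => //; rewrite ?inE ?(leq_ltn_trans le_ij) //.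
by move=> v u w; apply: leq_trans.
Qed.

Definition past (j : nat) : {set T} :=
  [set u | (rank u < j) && (u \in bag (first_bag (vtx j)))].

(* The fallback [vtx j.-1] keeps every stage connected to the previous one by a
   nonempty set; it is the only place where [k >= 1] is used. *)
Definition anchor (j : nat) : {set T} :=
  if past j == set0 then [set vtx j.-1] else past j.

Definition stage (j : nat) : {set T} :=
  if j is _.+1 then vtx j |: anchor j else [set vtx 0].

Lemma mem_past u j t : rank u < j -> j < n ->
  first_bag (vtx j) <= t -> t < size bags -> u \in bag t -> u \in past j.
Proof.
move=> lt_uj lt_j le_jt lt_t u_t; rewrite inE lt_uj /=.
apply: mem_bag_between lt_t u_t; rewrite le_jt andbT -{1}(rankK u).
exact: first_bag_vtx_mono (ltnW lt_uj) lt_j.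
Qed.

Lemma vtx_in_stage j : vtx j \in stage j.
Proof. by case: j => [|j]; rewrite !inE eqxx. Qed.

Lemma past_sub_stage j : past j \subset stage j.
Proof.
apply/subsetP => u u_past; case: j u_past => [|j] u_past; first by rewrite inE ltn0 in u_past.
have past_neq0 : past j.+1 != set0 by apply/set0Pn; exists u.
by rewrite /stage /anchor (negbTE past_neq0) in_setU1 u_past orbT.
Qed.

Lemma anchor_neq0 j : anchor j != set0.
Proof. by rewrite /anchor; case: ifPn => // _; apply/set0Pn; exists (vtx j.-1); rewrite inE. Qed.

Lemma stage_neq0 j : stage j != set0.
Proof. by apply/set0Pn; exists (vtx j); apply: vtx_in_stage. Qed.

Lemma stage_rank_le j u : j < n -> u \in stage j -> rank u <= j.
Proof.
case: j => [|j] lt_j; first by rewrite inE => /eqP->; rewrite vtxK.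
rewrite in_setU1 /anchor => /predU1P[->|]; first by rewrite vtxK.
case: ifP => _; rewrite inE; last by case/andP=> /ltnW.
by move=> /eqP->; rewrite vtxK ?(ltnW lt_j).
Qed.

Lemma vtx_notin_prev_stage j : j.+1 < n -> vtx j.+1 \notin stage j.
Proof. by move=> lt_j; apply/negP => /(stage_rank_le (ltnW lt_j)); rewrite vtxK ?ltnn. Qed.

Lemma card_stage j : j < n -> #|stage j| <= k.+1.
Proof.
case: j => [|j] lt_j; first by rewrite cards1.
rewrite /stage /anchor; case: ifP => _.
  by rewrite cardsU1 cards1 (leq_trans (leq_add (leq_b1 _) (leqnn 1))).
apply: leq_trans (bags_width (first_bag_lt (vtx j.+1))).
apply/subset_leq_card/subsetP => u; rewrite in_setU1 => /predU1P[->|].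
  exact: mem_first_bag.
by rewrite inE => /andP[].
Qed.

Lemma anchor_sub_stage j : j.+1 < n -> anchor j.+1 \subset stage j.
Proof.
move=> lt_j; rewrite /anchor; case: ifP => _; first by rewrite sub1set vtx_in_stage.
apply/subsetP => u; rewrite inE => /andP[lt_uj u_bag].
rewrite ltnS leq_eqVlt in lt_uj; case/predU1P: lt_uj => [<-|lt_uj].
  by rewrite -{1}(rankK u) vtx_in_stage.
apply: (subsetP (past_sub_stage j)); apply: mem_past lt_uj (ltnW lt_j) _ _ u_bag.
- exact: first_bag_vtx_mono.
- exact: first_bag_lt.
Qed.

Lemma stage_covers u v t : t < size bags -> u \in bag t -> v \in bag t ->
  rank u < rank v -> (u \in stage (rank v)) && (v \in stage (rank v)).
Proof.
move=> lt_t u_t v_t lt_uv; rewrite -{2}(rankK v) vtx_in_stage andbT.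
apply: (subsetP (past_sub_stage _)); apply: mem_past lt_uv (rank_lt v) _ lt_t u_t.
by rewrite rankK first_bag_le.
Qed.

(* Walk positions are tagged with the current stage, which advances exactly at additions. *)
Definition walk_step (p q : nat * {set T}) : bool :=
  ((q.1 == p.1) && removal_step p.2 q.2) ||
  [&& q.1 == p.1.+1, q.1 < n, vtx q.1 \notin p.2 & q.2 == vtx q.1 |: p.2].

Definition bounded_nonempty (A : {set T}) : bool := (A != set0) && (#|A| <= k.+1).

Local Notation leaving j := (enum (stage j :\: anchor j.+1)).

Definition segment (j : nat) : seq (nat * {set T}) :=
  rcons [seq (j, A) | A <- removals (stage j) (leaving j)] (j.+1, stage j.+1).

Lemma stage_minus_leaving j : j.+1 < n -> stage j :\: [set x in leaving j] = anchor j.+1.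
Proof. by move=> lt_j; rewrite set_enum setDDr setDv set0U; apply/setIidPr/anchor_sub_stage. Qed.

Lemma segment_path j : j.+1 < n -> path walk_step (j, stage j) (segment j).
Proof.
move=> lt_j; rewrite rcons_path last_map last_removals stage_minus_leaving //.
apply/andP; split.
  have lift_step : {homo pair j : A B / removal_step A B >-> walk_step A B}.
    by move=> A B step_AB; rewrite /walk_step /= eqxx step_AB.
  apply: (homo_path lift_step); apply: path_removals; first exact: enum_uniq.
  by move=> u; rewrite mem_enum inE => /andP[].
rewrite /walk_step /= eqxx lt_j eqxx andbT; apply/orP; right.
exact: contra (subsetP (anchor_sub_stage lt_j) _) (vtx_notin_prev_stage lt_j).
Qed.

Lemma segment_bounded j : j.+1 < n -> all (fun p => bounded_nonempty p.2) (segment j).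
Proof.
move=> lt_j; rewrite all_rcons /bounded_nonempty stage_neq0 card_stage //=.
apply/allP => _ /mapP[A A_rem ->] /=.
have [lb ub] := removals_between A_rem; rewrite stage_minus_leaving // in lb.
apply/andP; split; last exact: leq_trans (subset_leq_card ub) (card_stage (ltnW lt_j)).
by apply: contraNneq (anchor_neq0 j.+1) => A0; rewrite -subset0 -A0.
Qed.

Fixpoint segments (j m : nat) : seq (nat * {set T}) :=
  if m is m'.+1 then segment j ++ segments j.+1 m' else [::].

Lemma segments_path j m : j + m < n -> path walk_step (j, stage j) (segments j m).
Proof.
elim: m j => [//|m IHm] j lt_jm /=.
have lt_j : j.+1 < n by apply: leq_ltn_trans lt_jm; rewrite addnS ltnS leq_addr.
by rewrite cat_path segment_path //= last_rcons IHm // addSn -addnS.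
Qed.

Lemma segments_bounded j m : j + m < n -> all (fun p => bounded_nonempty p.2) (segments j m).
Proof.
elim: m j => [//|m IHm] j lt_jm /=.
have lt_j : j.+1 < n by apply: leq_ltn_trans lt_jm; rewrite addnS ltnS leq_addr.
by rewrite all_cat segment_bounded // IHm // addSn -addnS.
Qed.

Lemma stage_in_segments j m i : j <= i <= j + m -> (i, stage i) \in (j, stage j) :: segments j m.
Proof.
elim: m j => [|m IHm] j; first by rewrite addn0 -eqn_leq => /eqP->; rewrite mem_head.
rewrite leq_eqVlt => /andP[/predU1P[->|lt_ji] le_im]; first exact: mem_head.
have := IHm j.+1; rewrite lt_ji addSn -addnS le_im => /(_ isT).
rewrite /= !inE mem_cat /segment mem_rcons inE => /predU1P[->|->]; rewrite ?eqxx ?orbT //.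
Qed.

Definition indexed_walk : seq (nat * {set T}) := (0, stage 0) :: segments 0 n.-1.
Definition walk : seq {set T} := [seq p.2 | p <- indexed_walk].

Local Notation iwalk i := (nth (0, set0) indexed_walk i).

Lemma all_stages_lt : 0 + n.-1 < n.
Proof. by rewrite add0n prednK ?n_gt0. Qed.

Lemma size_walk : size walk = size indexed_walk.
Proof. exact: size_map. Qed.

Lemma nth_walk i : i < size indexed_walk -> nth set0 walk i = (iwalk i).2.
Proof. exact: nth_map. Qed.

Lemma indexed_walk_step i : i.+1 < size indexed_walk -> walk_step (iwalk i) (iwalk i.+1).
Proof. by have /(pathP (0, set0)) step := segments_path all_stages_lt; apply: step. Qed.

Lemma walk_stage_mono i j : i <= j -> j < size indexed_walk -> (iwalk i).1 <= (iwalk j).1.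
Proof.
elim: j => [|j IHj]; first by rewrite leqn0 => /eqP->.
rewrite leq_eqVlt => /predU1P[-> //|le_ij] lt_j; apply: leq_trans (IHj le_ij (ltnW lt_j)) _.
by case/orP: (indexed_walk_step lt_j) => [/andP[/eqP-> _]|/and4P[/eqP-> _ _ _]].
Qed.

Lemma walk_incoming_stage i v : i < size indexed_walk -> incoming walk i v ->
  (iwalk i).1 = rank v /\ (0 < i -> (iwalk i.-1).1.+1 = (iwalk i).1).
Proof.
case: i => [|i] lt_i; rewrite /incoming nth_walk //=.
  by rewrite inE => /eqP->; rewrite vtxK ?n_gt0.
rewrite nth_walk ?(ltnW lt_i) // => /andP[v_i v_i'].
case/orP: (indexed_walk_step lt_i) => [/andP[_ /exists_inP[u _ /eqP eq_i]]|].
  by move: v_i; rewrite eq_i !inE (negbTE v_i') andbF.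
case/and4P=> /eqP stage_i lt_stage _ /eqP eq_i; split=> [|_]; last by rewrite stage_i.
by move: v_i; rewrite eq_i in_setU1 (negbTE v_i') orbF => /eqP->; rewrite vtxK.
Qed.

Lemma walk_has_stage j : j < n -> exists2 i, i < size walk & nth set0 walk i = stage j.
Proof.
move=> lt_j; have iw_j : (j, stage j) \in indexed_walk.
  by apply: stage_in_segments; rewrite add0n leq0n -ltnS prednK ?n_gt0.
exists (index (j, stage j) indexed_walk); first by rewrite size_walk index_mem.
by rewrite nth_walk ?index_mem // nth_index.
Qed.

Lemma walk_bounded i : i < size walk -> bounded_nonempty (nth set0 walk i).
Proof.
rewrite size_walk => lt_i; rewrite nth_walk //; case: i lt_i => [|i] lt_i.
  by rewrite /bounded_nonempty stage_neq0 card_stage ?n_gt0.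
by have /all_nthP := segments_bounded all_stages_lt; apply.
Qed.

Lemma walk_simplicial : is_simplicial_walk k walk.
Proof.
split=> // [i /walk_bounded /andP[] //||i]; first by rewrite /= cards1.
rewrite size_walk => lt_i; rewrite !nth_walk ?(ltnW lt_i) //.
case/orP: (indexed_walk_step lt_i) => [/andP[_ /exists_inP[u u_i /eqP->]]|].
  by exists u; right; rewrite setD1K ?setD11.
by case/and4P=> _ _ notin_i /eqP->; exists (vtx (iwalk i.+1).1); left.
Qed.

Lemma walk_not_incoming_twice i j v : i < j -> j < size walk ->
  incoming walk i v -> incoming walk j v -> False.
Proof.
rewrite size_walk => lt_ij lt_j inc_i inc_j.
have [stage_i _] := walk_incoming_stage (ltn_trans lt_ij lt_j) inc_i.
have [stage_j /(_ (leq_ltn_trans (leq0n i) lt_ij)) stage_prev] := walk_incoming_stage lt_j inc_j.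
have le_i_prev : i <= j.-1 by rewrite -ltnS prednK // (leq_ltn_trans (leq0n i) lt_ij).
have := walk_stage_mono le_i_prev (leq_ltn_trans (leq_pred j) lt_j).
by rewrite stage_i -stage_j -stage_prev ltnn.
Qed.

Lemma walk_incoming_once v : #|[set i : 'I_(size walk) | incoming walk i v]| = 1.
Proof.
apply: card_incoming_eq1 => [|i j lt_i lt_j inc_i inc_j].
  have [i lt_i walk_i] := walk_has_stage (rank_lt v).
  by exists i => //; rewrite walk_i -{1}(rankK v) vtx_in_stage.
case: (ltngtP i j) => // [lt_ij|lt_ji].
  by case: (walk_not_incoming_twice lt_ij lt_j inc_i inc_j).
by case: (walk_not_incoming_twice lt_ji lt_i inc_j inc_i).
Qed.

Lemma walk_covers_bags u v t : t < size bags -> u \in bag t -> v \in bag t ->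
  exists2 i, i < size walk & (u \in nth set0 walk i) && (v \in nth set0 walk i).
Proof.
wlog le_uv : u v / rank u <= rank v => [cover|lt_t u_t v_t].
  case: (leqP (rank u) (rank v)) => [/cover//|/ltnW/cover cover_vu lt_t u_t v_t].
  by have [i lt_i uv_i] := cover_vu lt_t v_t u_t; exists i => //; rewrite andbC.
have [i lt_i walk_i] := walk_has_stage (rank_lt v); exists i => //; rewrite walk_i.
move: le_uv; rewrite leq_eqVlt => /predU1P[eq_uv|]; last exact: stage_covers lt_t u_t v_t.
have -> : u = v by rewrite -(rankK u) eq_uv rankK.
by rewrite andbb -{1}(rankK v) vtx_in_stage.
Qed.

Lemma walk_decomposing : is_decomposing e walk.
Proof.
split=> [|u v uv]; first exact: walk_incoming_once.
case: bags_pd => _ edges _ _; have [t lt_t /andP[u_t v_t]] := edges u v uv.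
exact: walk_covers_bags u_t v_t.
Qed.

End PathDecompositionToWalk.

Theorem proposition4 (T : finType) (e : rel T)
    (e_sym : symmetric e) (e_irr : irreflexive e)
    (T_nonempty : 0 < #|T|) (k : nat) (hk : 1 <= k) :
  has_pd_width_le e k <->
  exists s : seq {set T}, is_simplicial_walk k s /\ is_decomposing e s.
Proof.
split=> [[bags [bags_pd bags_width]] | [s [s_walk s_dec]]].
  have [x0 _] := card_gt0P T_nonempty.
  exists (walk bags x0); split; first exact: walk_simplicial hk bags_pd bags_width.
  exact: walk_decomposing.
by exists s; apply: decomposing_walk_path_decomposition s_walk s_dec.
Qed.
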